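(* Let $R$ be a commutative multiplicative hyperring with identity having the zero absorbing property, and let $\alpha$ be a good endomorphism of $R$. Then $\mathrm{Nil}_\alpha(R)\subseteq\sqrt[\alpha]{\langle 0\rangle}$.
   Context: A multiplicative hyperring is an abelian group $(R,+)$ with a hyperoperation $\circ:R\times R\to \mathcal P^*(R)$ (nonempty subsets) such that $a\circ(b\circ c)=(a\circ b)\circ c$, $a\circ(b+c)\subseteq a\circ b+a\circ c$, $(b+c)\circ a\subseteq b\circ a+c\circ a$, and $a\circ(-b)=(-a)\circ b=-(a\circ b)$. Products of subsets are unions of elementwise products, and $x^n=x\circ\cdots\circ x$ ($n$ factors). Commutative means $a\circ b=b\circ a$. An identity $1$ satisfies $a\in1\circ a$ for all $a$. $R$ has the zero absorbing property if $0\circ r=r\circ 0=\{0\}$ for all $r$. A hyperideal is a nonempty $I$ closed under subtraction with $r\circ x\subseteq I$ for $r\in R$, $x\in I$. Standing assumption: all hyperideals are $\mathbf C$-hyperideals, i.e. for every finite product $A=r_1\circ\cdots\circ r_n$, $A\cap I\ne\emptyset$ implies $A\subseteq I$. $\langle 0\rangle$ is the hyperideal generated by $0$. A good endomorphism $\alpha$ satisfies $\alpha(x+y)=\alpha(x)+\alpha(y)$ and $\alpha(x\circ y)=\alpha(x)\circ\alpha(y)$; it is applied to sets elementwise. An element $x$ is $\alpha$-nilpotent if $0\in\alpha(x^n)$ for some integer $n>0$, and $\mathrm{Nil}_\alpha(R)$ is the set of $\alpha$-nilpotent elements. For a hyperideal $J$ (with $R$ having the zero absorbing property), the $\alpha$-radical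 is $\sqrt[\alpha]{J}=\{r\in R:\alpha(r^n)\subseteq J\text{ for some }n\in\mathbb N\}$. *)

From HB Require Import structures.
From mathcomp Require Import all_boot all_algebra.
Set Implicit Arguments. Unset Strict Implicit. Unset Printing Implicit Defensive.
Import GRing.Theory.
Local Open Scope ring_scope.

Section Hyperring.
Variable R : zmodType.

Definition hset := R -> Prop.
Definition hsub (A B : hset) : Prop := forall x, A x -> B x.
Definition heq (A B : hset) : Prop := forall x, A x <-> B x.
Definition hsing (a : R) : hset := fun x => x = a.

Variable hm : R -> R -> hset.

Definition hmulS (A B : hset) : hset :=
  fun x => exists a b, A a /\ B b /\ hm a b x.
Definition haddS (A B : hset) : hset :=
  fun x => exists a b, A a /\ B b /\ x = a + b.
Definition hoppS (A : hset) : hset := fun x => A (- x).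

Definition is_mult_hyperring : Prop :=
  [/\ (forall a b, exists x, hm a b x),
      (forall a b c, heq (hmulS (hsing a) (hm b c)) (hmulS (hm a b) (hsing c))),
      (forall a b c, hsub (hm a (b + c)) (haddS (hm a b) (hm a c))),
      (forall a b c, hsub (hm (b + c) a) (haddS (hm b a) (hm c a))) &
      (forall a b, heq (hm a (- b)) (hoppS (hm a b)) /\
                   heq (hm (- a) b) (hoppS (hm a b)))].

Definition hcommutative : Prop := forall a b, heq (hm a b) (hm b a).
Definition hidentity (one : R) : Prop := forall a, hm one a a.
Definition zero_absorbing : Prop :=
  forall r, heq (hm 0 r) (hsing 0) /\ heq (hm r 0) (hsing 0).

(* finite product r_1 o ... o r_n of a nonempty list (r :: rs) *)
Fixpoint hprod_aux (A : hset) (rs : seq R) : hset :=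
  match rs with
  | [::] => A
  | r :: rs' => hprod_aux (hmulS A (hsing r)) rs'
  end.
Definition hprod (r : R) (rs : seq R) : hset := hprod_aux (hsing r) rs.

(* x^n = x o ... o x (n factors), meaningful for n >= 1 *)
Definition hpow (x : R) (n : nat) : hset := hprod x (nseq n.-1 x).

Definition hyperideal (I : hset) : Prop :=
  [/\ exists x, I x,
      (forall x y, I x -> I y -> I (x - y)) &
      (forall r x, I x -> hsub (hm r x) I)].

Definition C_hyperideal (I : hset) : Prop :=
  forall r rs, (exists x, hprod r rs x /\ I x) -> hsub (hprod r rs) I.

Definition all_hyperideals_C : Prop :=
  forall I, hyperideal I -> C_hyperideal I.

(* <0> : the hyperideal generated by 0 (intersection of all hyperideals containing 0) *)
Definition hgen0 : hset := fun x => forall I, hyperideal I -> I 0 -> I x.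

Definition himg (f : R -> R) (A : hset) : hset :=
  fun y => exists x, A x /\ y = f x.

Definition good_endo (f : R -> R) : Prop :=
  (forall x y, f (x + y) = f x + f y) /\
  (forall x y, heq (himg f (hm x y)) (hm (f x) (f y))).

Definition Nil_alpha (f : R -> R) : hset :=
  fun x => exists n, (0 < n)%N /\ himg f (hpow x n) 0.

Definition alpha_radical (f : R -> R) (J : hset) : hset :=
  fun r => exists n, (0 < n)%N /\ hsub (himg f (hpow r n)) J.

End Hyperring.

(* If 0 lies in alpha(x^n), then 0 lies in alpha(x)^n, since a multiplicative
   map sends a hyperproduct into the hyperproduct of the images.  Every
   hyperideal I containing 0 then meets the finite product alpha(x)^n, so by
   the C-property alpha(x)^n, and with it alpha(x^n), lies in I. *)
From mathcomp Require Import all_boot all_algebra.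

Section HyperProducts.
Variables (R : zmodType) (hm : R -> R -> hset R).

Lemma hprod_aux_sub (rs : seq R) (A B : hset R) :
  hsub A B -> hsub (hprod_aux hm A rs) (hprod_aux hm B rs).
Proof.
elim: rs A B => [|r rs IH] A B AB //=.
apply: IH => x [a [b [Aa [Bb Hx]]]].
by exists a, b; split; [apply: AB|].
Qed.

Variable f : R -> R.
Hypothesis f_hm_sub : forall x y, hsub (himg f (hm x y)) (hm (f x) (f y)).

Lemma himg_hprod_aux_sub (rs : seq R) (A : hset R) :
  hsub (himg f (hprod_aux hm A rs)) (hprod_aux hm (himg f A) (map f rs)).
Proof.
elim: rs A => [|r rs IH] A //= z /IH; apply: hprod_aux_sub.
move=> y [w [[a [b [Aa [-> Hw]]]] ->]].
exists (f a), (f r); split; first by exists a.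
by split; last by apply: f_hm_sub; exists w.
Qed.

Lemma himg_hpow_sub (x : R) (n : nat) :
  hsub (himg f (hpow hm x n)) (hpow hm (f x) n).
Proof.
move=> z /himg_hprod_aux_sub; rewrite map_nseq; apply: hprod_aux_sub.
by move=> y [w [-> ->]].
Qed.

End HyperProducts.

Theorem mainTheorem12 (R : zmodType) (hm : R -> R -> hset R) (one : R)
  (alpha : R -> R) :
  is_mult_hyperring hm -> hcommutative hm -> hidentity hm one ->
  zero_absorbing hm -> all_hyperideals_C hm -> good_endo hm alpha ->
  hsub (Nil_alpha hm alpha) (alpha_radical hm alpha (hgen0 hm)).
Proof.
move=> _ _ _ _ allC [_ alpha_hm] x [n [n_gt0 alpha_xn0]].
have alpha_pow_sub :=
  @himg_hpow_sub R hm alpha (fun a b c => proj1 (alpha_hm a b c)) x n.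
exists n; split => // y alpha_xn_y I I_ideal I0.
apply: (allC I I_ideal); last exact: alpha_pow_sub.
by exists 0%R; split => //; apply: alpha_pow_sub.
Qed.
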